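(* Fix $\alpha>1$ and $K>1$. For $n\ge2$ let $\mathcal{M}=\mathcal{M}(\alpha,K)$ be the seeded intervals defined below, and let $N_n$ be the number of distinct integer triples $(s,v,e)$ with $(s,e]\in\mathcal{M}$ and $s<v<e$. Then $N_n=\mathcal{O}(n\log n)$, i.e. there is a constant $C$ depending only on $\alpha$ and $K$ such that $N_n\le Cn\log n$ for all $n\ge2$.
   Context: Seeded intervals $\mathcal{M}(\alpha,K)$ for sample size $n$: let $l_1=1$, $l_{j+1}=\max\{l_j+1,\lfloor\alpha l_j\rfloor\}$ for $j\ge1$, $H=\max\{j:l_j\le n/2\}$, $s_l=\max\{1,\lfloor l/K\rfloor\}$, $\mathcal{I}_l=\{(n-2l,n]\}\cup\{(is_l,\,is_l+2l]: i=0,1,\dots,\lfloor(n-2l)/s_l\rfloor\}$, and $\mathcal{M}(\alpha,K)=\bigcup_{j=1}^{H}\mathcal{I}_{l_j}$, where $(a,b]$ denotes the integer interval $\{a+1,\dots,b\}$. *)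

From mathcomp Require Import all_boot all_order all_algebra.
From mathcomp Require Import all_classical all_reals all_analysis.
Set Implicit Arguments. Unset Strict Implicit. Unset Printing Implicit Defensive.
Import Order.TTheory GRing.Theory Num.Theory.
Local Open Scope ring_scope.

Section Seeded.
Variable R : realType.
Variables (alpha K : R).

(* ell_aux k = l_{k+1} (0-indexed auxiliary sequence). *)
Fixpoint ell_aux (k : nat) : nat :=
  match k with
  | 0 => 1%N
  | k'.+1 => maxn (ell_aux k').+1 (Num.truncn (alpha * (ell_aux k')%:R))
  end.

(* Paper's indexing: ell j = l_j for j >= 1 (ell 1 = 1). *)
Definition ell (j : nat) : nat := ell_aux j.-1.

(* H = max { j >= 1 : l_j <= n/2 }.  Since l_j >= j, any such j is <= n. *)
Definition seedH (n : nat) : nat :=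
  \max_(1 <= j < n.+1 | (2 * ell j <= n)%N) j.

Definition seed_step (l : nat) : nat := maxn 1 (Num.truncn (l%:R / K)).

(* I_l, an interval (a,b] being encoded as the pair (a,b). *)
Definition seedI (n l : nat) : seq (nat * nat) :=
  (n - 2 * l, n)%N ::
  [seq ((i * seed_step l)%N, (i * seed_step l + 2 * l)%N)
     | i <- iota 0 ((n - 2 * l) %/ seed_step l).+1].

Definition seedM (n : nat) : seq (nat * nat) :=
  undup (flatten [seq seedI n (ell j) | j <- iota 1 (seedH n)]).

Definition seed_triples (n : nat) : seq (nat * nat * nat) :=
  flatten [seq [seq (p.1, v, p.2) | v <- iota p.1.+1 (p.2 - p.1.+1)]
          | p <- seedM n].

Definition seedN (n : nat) : nat := size (undup (seed_triples n)).

End Seeded.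

From mathcomp Require Import all_boot all_order all_algebra.
From mathcomp Require Import all_classical all_reals all_analysis.
From mathcomp Require Import zify ring lra.
Import Order.TTheory GRing.Theory Num.Theory.
Local Open Scope ring_scope.

(* The number N_n of triples (s,v,e) with (s,e] in M and s < v < e is at most
   the total number of interior points of the intervals of M, counted with
   multiplicity over the levels I_{l_1}, ..., I_{l_H} (lemmas
   [seedN_le_interior] and [seedM_interior_le_levels]).
   - One level I_l consists of about (n - 2l)/s_l + 2 intervals of length 2l;
     since l <= 2 K s_l, its interior points number at most (4K + 2) n
     ([level_interior_le]).
   - The lengths l_j grow geometrically with ratio g = (alpha + 1)/2
     ([ell_aux_growth]); as 2 l_H <= n, the number of levels is
     H <= log_g n + 1 <= (1/ln g + 1/ln 2) ln n ([seedH_le_log]).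
   Multiplying gives N_n <= (4K + 2)(1/ln g + 1/ln 2) n ln n. *)

Definition interior (p : nat * nat) : nat := (p.2 - p.1.+1)%N.

Lemma sum_undup_le (T : eqType) (F : T -> nat) (s : seq T) :
  (\sum_(x <- undup s) F x <= \sum_(x <- s) F x)%N.
Proof.
apply: (sub_le_big_seq leqnn (fun x y => leq_addr y x)) => x.
exact/leq_count_subseq/undup_subseq.
Qed.

Lemma sum_le_size_mul (T : eqType) (F : T -> nat) (b : nat) (s : seq T) :
  (forall x, x \in s -> F x <= b)%N -> (\sum_(x <- s) F x <= b * size s)%N.
Proof.
move=> Fb; rewrite -sum1_size big_distrr /= muln1.
rewrite big_seq_cond [X in (_ <= X)%N]big_seq_cond.
by apply: leq_sum => x /andP[xs _]; exact: Fb.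
Qed.

Section Counting.
Variables (R : realType) (alpha K : R).

Lemma seedN_le_interior n :
  (seedN alpha K n <= \sum_(p <- seedM alpha K n) interior p)%N.
Proof.
rewrite /seedN; apply: leq_trans (size_undup _) _.
rewrite /seed_triples size_flatten /shape -map_comp sumnE big_map.
by apply: eq_leq; apply: eq_bigr => p _; rewrite /= size_map size_iota.
Qed.

Lemma seedM_interior_le_levels n :
  (\sum_(p <- seedM alpha K n) interior p <=
   \sum_(1 <= j < (seedH alpha n).+1) \sum_(p <- seedI K n (ell alpha j)) interior p)%N.
Proof.
rewrite /seedM; apply: leq_trans (sum_undup_le _ _ _) _.
by rewrite big_flatten big_map /index_iota subn1.
Qed.

End Counting.

Section Levels.
Variables (R : realType) (K : R).
Hypothesis K_gt0 : 0 < K.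

Lemma seed_step_bound (l : nat) : (l%:R : R) <= 2 * K * (seed_step K l)%:R.
Proof.
rewrite /seed_step; set t := Num.truncn (l%:R / K).
have lt_t : (l%:R : R) < K * t.+1%:R.
  by rewrite -ltr_pdivrMl // mulrC truncnS_gt.
have le_t : (t.+1%:R : R) <= 2 * (maxn 1 t)%:R by rewrite -natrM ler_nat; lia.
apply: le_trans (ltW lt_t) _.
by rewrite [2 * K]mulrC -mulrA ler_pM2l.
Qed.

Lemma level_interior_count (n l : nat) :
  (\sum_(p <- seedI K n l) interior p <= 2 * l * ((n - 2 * l) %/ seed_step K l).+2)%N.
Proof.
have -> : ((n - 2 * l) %/ seed_step K l).+2 = size (seedI K n l).
  by rewrite /seedI /= size_map size_iota.
apply: sum_le_size_mul => p.
by rewrite /seedI in_cons => /orP[/eqP-> | /mapP[i _ ->]]; rewrite /interior /=; lia.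
Qed.

Lemma level_interior_le (n l : nat) : (2 * l <= n)%N ->
  (\sum_(p <- seedI K n l) interior p)%:R <= (4 * K + 2) * (n%:R : R).
Proof.
move=> le_2l_n.
apply: le_trans (_ : (2 * l * ((n - 2 * l) %/ seed_step K l).+2)%:R <= _).
  by rewrite ler_nat level_interior_count.
set s := seed_step K l; set d := ((n - 2 * l) %/ s)%N.
have le_l : (l%:R : R) <= 2 * K * s%:R by exact: seed_step_bound.
have le_ds : (d%:R * s%:R + 2 * l%:R : R) <= n%:R.
  rewrite -!natrM -natrD ler_nat.
  by have := leq_divM (n - 2 * l) s; rewrite -/d; lia.
have ds_ge0 : (0 : R) <= d%:R * s%:R by [].
have le_ld : (l%:R * d%:R : R) <= 2 * K * s%:R * d%:R by rewrite ler_wpM2r.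
have le_Kn : K * (d%:R * s%:R + 2 * l%:R) <= K * n%:R.
  by rewrite ler_wpM2l // ltW.
have le_Kl : 0 <= K * l%:R by rewrite mulr_ge0 // ltW.
have -> : ((2 * l * d.+2)%N%:R : R) = 2 * l%:R * (d%:R + 2).
  by rewrite -[d.+2]addn2 !(natrM, natrD).
lra.
Qed.

End Levels.

Section Growth.
Variables (R : realType) (alpha : R).

Lemma ell_aux_mono : {homo ell_aux alpha : i j / (i <= j)%N}.
Proof.
apply: homo_leq => [//|j i k|k]; first exact: leq_trans.
by rewrite /= (leq_trans (leqnSn _)) // leq_maxl.
Qed.

(* One step multiplies the length by at least g = (alpha + 1)/2: the next
   length is both > l and > alpha l - 1, and is therefore at least their mean. *)
Lemma ell_aux_ratio (k : nat) :
  (alpha + 1) / 2 * (ell_aux alpha k)%:R <= (ell_aux alpha k.+1)%:R.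
Proof.
rewrite /=; set e := ell_aux alpha k; set m := maxn _ _.
have gt_e : (e%:R + 1 : R) <= m%:R by rewrite natr1 ler_nat leq_maxl.
have gt_ae : alpha * e%:R < m%:R + 1.
  by apply: lt_le_trans (truncnS_gt _) _; rewrite natr1 ler_nat ltnS leq_maxr.
have -> : (alpha + 1) / 2 * e%:R = (alpha * e%:R + e%:R) / 2 by ring.
lra.
Qed.

Lemma ell_aux_growth (k : nat) : 1 < alpha ->
  ((alpha + 1) / 2) ^+ k <= (ell_aux alpha k)%:R.
Proof.
move=> ha; elim: k => [|k IH]; first by rewrite expr0.
rewrite exprS; apply: le_trans (ell_aux_ratio k).
by rewrite ler_wpM2l // divr_ge0 //; lra.
Qed.

Lemma seedH_level (n j : nat) :
  (1 <= j <= seedH alpha n)%N -> (2 * ell alpha j <= n)%N.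
Proof.
have H_valid : seedH alpha n = 0%N \/ (2 * ell alpha (seedH alpha n) <= n)%N.
  rewrite /seedH; apply: (big_ind (fun x => x = 0%N \/ (2 * ell alpha x <= n)%N)).
  - by left.
  - by move=> x y hx hy; rewrite /maxn; case: ifP.
  - by move=> i; right.
case: H_valid => [-> | le_H]; first lia.
move=> /andP[j1 jH]; apply: leq_trans le_H; rewrite leq_mul2l /ell.
by apply: ell_aux_mono; lia.
Qed.

Lemma seedH_le_log (n : nat) : 1 < alpha -> (2 <= n)%N ->
  (seedH alpha n)%:R <= (1 / ln ((alpha + 1) / 2) + 1 / ln 2) * ln (n%:R : R).
Proof.
move=> ha n2; set g := (alpha + 1) / 2; set H := seedH alpha n.
have lng_gt0 : 0 < ln g by apply: ln_gt0; rewrite /g; lra.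
have ln2_gt0 : 0 < ln (2 : R) by apply: ln_gt0; lra.
have n2R : (2 : R) <= n%:R by rewrite (ler_nat R 2).
have ln2_le : ln 2 <= ln (n%:R : R) by rewrite ler_ln // posrE; lra.
have [-> | H_gt0] := posnP H.
  by rewrite mulr_ge0 // ?addr_ge0 ?divr_ge0 // ?ltW //; lra.
have gH_le : g ^+ H.-1 <= n%:R.
  apply: le_trans (ell_aux_growth H.-1 ha) _; rewrite ler_nat.
  have /seedH_level : (1 <= H <= H)%N by rewrite H_gt0 leqnn.
  by rewrite /ell -/H; lia.
have lnH_le : H.-1%:R * ln g <= ln (n%:R : R).
  rewrite mulr_natl -lnXn; last by rewrite /g; lra.
  by rewrite ler_ln // posrE ?exprn_gt0 //; rewrite /g; lra.
have -> : (H%:R : R) = H.-1%:R + 1 by rewrite natr1 prednK.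
rewrite mulrDl !mul1r ![_^-1 * _]mulrC; apply: lerD.
  by rewrite ler_pdivlMr.
by rewrite ler_pdivlMr // mul1r.
Qed.

End Growth.

Theorem lemma9 (R : realType) (alpha K : R) (halpha : 1 < alpha) (hK : 1 < K) :
  exists C : R, forall n : nat, (2 <= n)%N ->
    (seedN alpha K n)%:R <= C * n%:R * ln (n%:R : R).
Proof.
set c := 1 / ln ((alpha + 1) / 2) + 1 / ln (2 : R).
exists ((4 * K + 2) * c) => n n2; set H := seedH alpha n.
have coef_ge0 : 0 <= 4 * K + 2 by lra.
have N_le : ((seedN alpha K n)%:R : R) <= H%:R * ((4 * K + 2) * n%:R).
  apply: le_trans (_ : (\sum_(1 <= j < H.+1)
      \sum_(p <- seedI K n (ell alpha j)) interior p)%:R <= _).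
    rewrite ler_nat; apply: leq_trans (seedN_le_interior _ _ _ n) _.
    exact: seedM_interior_le_levels.
  rewrite natr_sum mulr_natl.
  rewrite (_ : _ *+ H = \sum_(1 <= j < H.+1) ((4 * K + 2) * n%:R)); last first.
    by rewrite sumr_const_nat subn1.
  apply: ler_sum_nat => j jH; apply: level_interior_le; first lra.
  by apply: seedH_level; lia.
apply: le_trans N_le _.
have -> : (4 * K + 2) * c * n%:R * ln (n%:R : R) = c * ln (n%:R) * ((4 * K + 2) * n%:R).
  by ring.
by rewrite ler_wpM2r ?mulr_ge0 ?seedH_le_log.
Qed.
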